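(* Let $S$ be a numerical semigroup with minimal generators $e<a_1<\dots<a_t$, and let $s\in S$. If $(x_0,x_1,\dots,x_t)$ is a $B^{\mathcal D}$-factorization of ${\rm adj}(s)$ of length at most ${\rm ord}(s;S)$, then $x_0=0$.
   Context: A numerical semigroup is a submonoid of $(\mathbb N,+)$ with finite complement. An $S$-factorization of $n$ is $(c_0,\dots,c_t)\in\mathbb N^{t+1}$ with $c_0e+\sum c_ia_i=n$, of length $\sum c_i$. ${\rm ord}(n;S)$ is the maximal such length. Let $d_i=a_i-e$, $B=\langle e,d_1,\dots,d_t\rangle$, $\mathcal D=(e,d_1,\dots,d_t)$. A $B^{\mathcal D}$-factorization of $b$ is $(x_0,\dots,x_t)\in\mathbb N^{t+1}$ with $x_0e+\sum x_id_i=b$, of length $\sum x_i$. The adjustment of $s$ is ${\rm adj}(s)=s-{\rm ord}(s;S)e$. *)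

From mathcomp Require Import all_boot.
Set Implicit Arguments. Unset Strict Implicit. Unset Printing Implicit Defensive.

(* Generators of S, indexed by 'I_t.+1: index 0 is e, index (lift ord0 j) is a_(j+1). *)
Definition gens (e t : nat) (a : 'I_t -> nat) (i : 'I_t.+1) : nat :=
  match unlift ord0 i with None => e | Some j => a j end.

Definition Dgens (e t : nat) (a : 'I_t -> nat) (i : 'I_t.+1) : nat :=
  match unlift ord0 i with None => e | Some j => a j - e end.

Definition is_fact (t : nat) (g : 'I_t.+1 -> nat) (n : nat) (c : 'I_t.+1 -> nat) : Prop :=
  \sum_(i < t.+1) c i * g i = n.

Definition flen (t : nat) (c : 'I_t.+1 -> nat) : nat := \sum_(i < t.+1) c i.

Definition inSg (t : nat) (g : 'I_t.+1 -> nat) (n : nat) : Prop := exists c, is_fact g n c.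

Definition min_gens_numsgp (e t : nat) (a : 'I_t -> nat) : Prop :=
  [/\ 0 < e,
      (forall i, e < a i),
      (forall i j : 'I_t, i < j -> a i < a j),
      (exists N, forall n, N <= n -> inSg (gens e a) n) &
      (forall i : 'I_t.+1, ~ (exists c, c i = 0 /\ is_fact (gens e a) (gens e a i) c))].

Definition is_ord (e t : nat) (a : 'I_t -> nat) (n k : nat) : Prop :=
  (exists c, is_fact (gens e a) n c /\ flen c = k) /\
  (forall c, is_fact (gens e a) n c -> flen c <= k).

From mathcomp Require Import all_boot.
From mathcomp Require Import zify.

Set Implicit Arguments.
Unset Strict Implicit.
Unset Printing Implicit Defensive.

(* Since a_i = d_i + e, a B^D-factorization (x_0, x_1, ..., x_t) of adj(s) = s - ord(s) e
   lifts to the S-factorization (ord(s) + x_0 - (x_1 + ... + x_t), x_1, ..., x_t) of s, of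
   length ord(s) + x_0; this is possible because x_1 + ... + x_t <= ord(s).  Maximality of
   ord(s) then forces x_0 = 0. *)

Lemma gens0 e t (a : 'I_t -> nat) : gens e a ord0 = e.
Proof. by rewrite /gens unlift_none. Qed.

Lemma gensS e t (a : 'I_t -> nat) j : gens e a (lift ord0 j) = a j.
Proof. by rewrite /gens liftK. Qed.

Lemma Dgens0 e t (a : 'I_t -> nat) : Dgens e a ord0 = e.
Proof. by rewrite /Dgens unlift_none. Qed.

Lemma DgensS e t (a : 'I_t -> nat) j : Dgens e a (lift ord0 j) = a j - e.
Proof. by rewrite /Dgens liftK. Qed.

Definition tail_len t (c : 'I_t.+1 -> nat) : nat := \sum_(j < t) c (lift ord0 j).

Lemma flen_head_tail t (c : 'I_t.+1 -> nat) : flen c = c ord0 + tail_len c.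
Proof. by rewrite /flen big_ord_recl. Qed.

Definition lift_Dfact t (x : 'I_t.+1 -> nat) (q : nat) : 'I_t.+1 -> nat :=
  fun i => if i == ord0 then x ord0 + q - tail_len x else x i.

Lemma tail_len_lift_Dfact t (x : 'I_t.+1 -> nat) q : tail_len (lift_Dfact x q) = tail_len x.
Proof.
by apply: eq_bigr => j _; rewrite /lift_Dfact eq_sym (negbTE (neq_lift _ _)).
Qed.

Lemma flen_lift_Dfact t (x : 'I_t.+1 -> nat) q :
  tail_len x <= q -> flen (lift_Dfact x q) = x ord0 + q.
Proof.
by move=> le_tq; rewrite flen_head_tail tail_len_lift_Dfact /lift_Dfact eqxx; lia.
Qed.

Section Lifting.

Variables (e t : nat) (a : 'I_t -> nat).
Hypothesis e_le_a : forall j, e <= a j.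

Lemma flen_mul_le_fact (c : 'I_t.+1 -> nat) (n : nat) :
  is_fact (gens e a) n c -> flen c * e <= n.
Proof.
rewrite /is_fact /flen big_distrl => <-; apply: leq_sum => i _.
rewrite leq_mul2l; case: (unliftP ord0 i) => [j ->|->].
- by rewrite gensS e_le_a orbT.
- by rewrite gens0 leqnn orbT.
Qed.

Lemma is_fact_lift_Dfact x n q :
  tail_len x <= q -> is_fact (Dgens e a) n x ->
  is_fact (gens e a) (n + q * e) (lift_Dfact x q).
Proof.
rewrite /is_fact => le_tq; rewrite !big_ord_recl gens0 Dgens0 => <-.
have gens_tail : \sum_(j < t) lift_Dfact x q (lift ord0 j) * gens e a (lift ord0 j)
    = \sum_(j < t) x (lift ord0 j) * (a j - e) + tail_len x * e.
  rewrite /tail_len big_distrl -big_split /=; apply: eq_bigr => j _.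
  by rewrite gensS /lift_Dfact eq_sym (negbTE (neq_lift _ _)) -mulnDr subnK.
have Dgens_tail : \sum_(j < t) x (lift ord0 j) * Dgens e a (lift ord0 j)
    = \sum_(j < t) x (lift ord0 j) * (a j - e).
  by apply: eq_bigr => j _; rewrite DgensS.
rewrite gens_tail Dgens_tail /lift_Dfact eqxx; nia.
Qed.

End Lifting.

Theorem lemma3p2 (e t : nat) (a : 'I_t -> nat) :
  min_gens_numsgp e a ->
  forall s : nat, inSg (gens e a) s ->
  forall k : nat, is_ord e a s k ->
  (* adj(s) = s - ord(s;S) * e *)
  forall x : 'I_t.+1 -> nat,
    is_fact (Dgens e a) (s - k * e) x -> flen x <= k ->
    x ord0 = 0.
Proof.
move=> [_ e_lt_a _ _ _] s _ k [[c [fact_c len_c]] ord_max] x fact_x len_x.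
have e_le_a j : e <= a j by apply: ltnW.
have ke_le_s : k * e <= s by rewrite -len_c; exact: flen_mul_le_fact fact_c.
have tail_le_k : tail_len x <= k by move: len_x; rewrite flen_head_tail; lia.
have fact_s := is_fact_lift_Dfact e_le_a tail_le_k fact_x.
rewrite subnK // in fact_s.
by move: (ord_max _ fact_s); rewrite flen_lift_Dfact //; lia.
Qed.
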